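(* Fix $\mathcal{D}_n$ and $\hat\theta$. Let $r\in\{1,\dots,n-1\}$. Define $h_i^{mVc}=|y_i^p-\hat y^s(x_i,\hat\theta)|\,(g_i^Tg_i)^{1/2}$, $i=1,\dots,n$, let $h^{mVc}_{(1)}\le\dots\le h^{mVc}_{(n)}$ be their order statistics, set $h^{mVc}_{(n+1)}=\infty$, and assume $h^{mVc}_{(n-r)}>0$. Let $k=\min\{s:0\le s\le r,\ (r-s)h^{mVc}_{(n-s)}<\sum_{i=1}^{n-s}h^{mVc}_{(i)}\}$ and $M=\frac{1}{r-k}\sum_{i=1}^{n-k}h^{mVc}_{(i)}$. Then the probabilities $$\pi_i^{mVc}=r\frac{h_i^{mVc}\wedge M}{\sum_{j=1}^n(h_j^{mVc}\wedge M)},\quad i=1,\dots,n,$$ minimize $\mathrm{tr}(\tilde V)$ over all $(\pi_1,\dots,\pi_n)$ with $\sum_{i=1}^n\pi_i=r$ and $0<\pi_i\le1$ (i.e. Poisson subsampling with these probabilities is mVc-optimal).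
   Context: Physical data $\mathcal{D}_n=\{(x_i,y_i^p)\}_{i=1}^n$ with $x_i\in\Omega\subset\mathbb{R}^d$; $\hat y^s(x,\theta)$ is a surrogate of a computer model, differentiable in $\theta\in\Theta\subset\mathbb{R}^q$; $\hat\theta=\arg\min_{\theta\in\Theta}\frac1n\sum_{i=1}^n[y_i^p-\hat y^s(x_i,\theta)]^2$. $g_i=\nabla_\theta\hat y^s(x_i,\hat\theta)$ (column vector). For subsampling probabilities $\pi_i$, $\tilde V=\frac{4}{n^2}\sum_{i=1}^n\frac{1-\pi_i}{\pi_i}[y_i^p-\hat y^s(x_i,\hat\theta)]^2g_ig_i^T$. $a\wedge b=\min(a,b)$. *)

From HB Require Import structures.
From mathcomp Require Import all_boot all_order all_algebra.
From mathcomp Require Import all_classical all_reals all_analysis.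
Set Implicit Arguments. Unset Strict Implicit. Unset Printing Implicit Defensive.
Import Order.TTheory GRing.Theory Num.Theory.
Import numFieldNormedType.Exports.
Local Open Scope ring_scope.

Section Defs.
Variable R : realType.

Definition grad (q : nat) (f : 'rV[R]_q -> R) (th : 'rV[R]_q) : 'cV[R]_q :=
  \col_(j < q) ('D_(delta_mx 0 j) f th).

Definition resid (d q n : nat) (x : 'I_n -> 'rV[R]_d) (y : 'I_n -> R)
  (ys : 'rV[R]_d -> 'rV[R]_q -> R) (th : 'rV[R]_q) (i : 'I_n) : R :=
  y i - ys (x i) th.

Definition loss (d q n : nat) (x : 'I_n -> 'rV[R]_d) (y : 'I_n -> R)
  (ys : 'rV[R]_d -> 'rV[R]_q -> R) (th : 'rV[R]_q) : R :=
  n%:R^-1 * \sum_(i < n) (resid x y ys th i) ^+ 2.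

Definition Vtilde (q n : nat) (e : 'I_n -> R) (g : 'I_n -> 'cV[R]_q)
  (pi : 'I_n -> R) : 'M[R]_q :=
  (4 / (n%:R ^+ 2)) *:
    \sum_(i < n) (((1 - pi i) / pi i) * (e i) ^+ 2) *: (g i *m (g i)^T).

Definition hmVc (q n : nat) (e : 'I_n -> R) (g : 'I_n -> 'cV[R]_q) (i : 'I_n) : R :=
  `|e i| * Num.sqrt (((g i)^T *m g i) 0 0).

(* sorted values: hsorted`_(j-1) is the order statistic h_(j), j = 1..n *)
Definition hsorted (n : nat) (h : 'I_n -> R) : seq R :=
  sort <=%R [seq h i | i <- enum 'I_n].

Definition hord (n : nat) (h : 'I_n -> R) (j : nat) : \bar R :=
  if (1 <= j <= n)%N then ((hsorted h)`_(j.-1))%:E else +oo%E.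

Definition hsum (n : nat) (h : 'I_n -> R) (m : nat) : R :=
  \sum_(0 <= i < m) (hsorted h)`_i.

Definition kcond (n r : nat) (h : 'I_n -> R) (s : nat) : bool :=
  (((r - s)%:R)%:E * hord h (n - s) < (hsum h (n - s))%:E)%E.

Definition kmin (n r : nat) (h : 'I_n -> R) : nat :=
  find (kcond r h) (iota 0 r.+1).

Definition Mthr (n r : nat) (h : 'I_n -> R) : R :=
  hsum h (n - kmin r h) / (r - kmin r h)%:R.

Definition pimVc (n r : nat) (h : 'I_n -> R) (i : 'I_n) : R :=
  r%:R * Num.min (h i) (Mthr r h) / \sum_(j < n) Num.min (h j) (Mthr r h).

End Defs.

(* Since tr(g g^T) = g^T g, the trace of Vtilde is (4/n^2) sum_i (1/pi_i - 1) h_i^2,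
   so only sum_i h_i^2 / pi_i has to be minimized under sum_i pi_i = r, pi_i <= 1.
   For every M > 0 the scalar function q |-> h^2 / q + M^2 q is minimized on (0, 1]
   at q = (h /\ M) / M; summing these pointwise inequalities, the penalty terms
   M^2 sum_i q_i agree for every admissible q. The threshold M of the theorem is
   exactly the one making these minimizers admissible: the choice of k guarantees
   h_(n-k) < M <= h_(n-k+1), so sum_j (h_j /\ M) = sum_{i <= n-k} h_(i) + k M = r M. *)
From HB Require Import structures.
From mathcomp Require Import all_boot all_order all_algebra.
From mathcomp Require Import all_classical all_reals all_analysis.
From mathcomp Require Import ring lra zify.
Import Order.TTheory GRing.Theory Num.Theory.
Import numFieldNormedType.Exports.
Local Open Scope ring_scope.

Section OrderStatistics.
Context {R : realType} {n : nat} (h : 'I_n -> R).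

Lemma size_hsorted : size (hsorted h) = n.
Proof. by rewrite size_sort size_map size_enum_ord. Qed.

Lemma sum_hsorted (F : R -> R) :
  \sum_(i < n) F (h i) = \sum_(0 <= i < n) F (hsorted h)`_i.
Proof.
have -> : \sum_(i < n) F (h i) = \sum_(v <- [seq h i | i <- enum 'I_n]) F v.
  by rewrite big_map big_enum.
by rewrite -(perm_big _ (permEl (perm_sort <=%R _))) (big_nth 0) size_hsorted.
Qed.

Lemma hsorted_le i j : (i <= j < n)%N -> (hsorted h)`_i <= (hsorted h)`_j.
Proof.
case/andP=> le_ij lt_jn.
have sorted_h : sorted <=%R (hsorted h) by apply: sort_sorted; exact: le_total.
apply: (sorted_leq_nth le_trans lexx 0 sorted_h) => //; rewrite inE size_hsorted //.
exact: leq_ltn_trans lt_jn.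
Qed.

Lemma hsumS m : hsum h m.+1 = hsum h m + (hsorted h)`_m.
Proof. exact: big_nat_recr. Qed.

Lemma hordE j : (0 < j <= n)%N -> hord h j = ((hsorted h)`_j.-1)%:E.
Proof. by rewrite /hord => ->. Qed.

Lemma kcondE r s : (s < n)%N ->
  kcond r h s = ((r - s)%:R * (hsorted h)`_(n - s).-1 < hsum h (n - s)).
Proof.
by move=> lt_sn; rewrite /kcond hordE ?subn_gt0 ?lt_sn ?leq_subr // -EFinM lte_fin.
Qed.

Hypothesis h_ge0 : forall j, 0 <= h j.

Lemma hsorted_ge0 i : (i < n)%N -> 0 <= (hsorted h)`_i.
Proof.
move=> lt_in; have : (hsorted h)`_i \in hsorted h by rewrite mem_nth ?size_hsorted.
by rewrite mem_sort => /mapP [j _ ->].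
Qed.

Lemma hsum_ge0 m : (m <= n)%N -> 0 <= hsum h m.
Proof.
move=> le_mn; rewrite /hsum big_nat_cond; apply: sumr_ge0 => i /andP [/andP [_ lt_im] _].
exact/hsorted_ge0/(leq_trans lt_im).
Qed.

End OrderStatistics.

Section Threshold.
Context {R : realType} {n r : nat} {h : 'I_n -> R}.
Hypotheses (h_ge0 : forall j, 0 <= h j) (r_gt0 : (0 < r)%N) (r_lt_n : (r < n)%N).
Hypothesis hord_gt0 : (0 < hord h (n - r))%E.

Let s := hsorted h.
Let k := kmin r h.
Let M := Mthr r h.

Lemma kcond_predr : kcond r h r.-1.
Proof.
have s_gt0 : 0 < s`_(n - r).-1.
  by move: hord_gt0; rewrite hordE ?subn_gt0 ?r_lt_n ?leq_subr // lte_fin.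
rewrite kcondE; last by lia.
have -> : (r - r.-1 = 1)%N by lia.
have -> : (n - r.-1 = (n - r).-1.+2)%N by lia.
rewrite mul1r hsumS ltrDr hsumS.
by apply: ltr_wpDl s_gt0; apply: hsum_ge0 => //; lia.
Qed.

Lemma kmin_le : (k <= r.-1)%N.
Proof.
rewrite leqNgt; apply/negP => /(before_find 0).
by rewrite nth_iota ?add0n ?kcond_predr //; lia.
Qed.

Lemma kcond_kmin : kcond r h k.
Proof.
have has_cond : has (kcond r h) (iota 0 r.+1).
  by apply/hasP; exists r.-1; rewrite ?kcond_predr // mem_iota; lia.
have := nth_find 0 has_cond; rewrite -/(kmin r h) -/k.
by rewrite nth_iota ?add0n //; have := kmin_le; lia.
Qed.

Lemma kcond_predkmin : (0 < k)%N -> ~~ kcond r h k.-1.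
Proof.
move=> k_gt0; apply/negP => cond_k1.
have /(before_find 0) : (k.-1 < k)%N by lia.
by rewrite nth_iota ?add0n ?cond_k1 //; have := kmin_le; lia.
Qed.

Let m := (n - k)%N.

Lemma kmin_lt_n : (k < n)%N.
Proof. by have := kmin_le; lia. Qed.

Lemma r_sub_kmin_gt0 : 0 < (r - k)%:R :> R.
Proof. by rewrite ltr0n; have := kmin_le; lia. Qed.

Lemma kcond_kminE : (r - k)%:R * s`_m.-1 < hsum h m.
Proof. by have := kcond_kmin; rewrite kcondE // kmin_lt_n. Qed.

Lemma Mthr_gt0 : 0 < M.
Proof.
rewrite divr_gt0 ?r_sub_kmin_gt0 //; apply: le_lt_trans kcond_kminE.
by rewrite mulr_ge0 ?hsorted_ge0 //; have := kmin_lt_n; lia.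
Qed.

Lemma hsorted_lt_Mthr i : (i < m)%N -> s`_i < M.
Proof.
move=> lt_im; have le_im : (i <= m.-1 < n)%N by have := kmin_lt_n; lia.
apply: le_lt_trans (hsorted_le h _ _ le_im) _.
by rewrite ltr_pdivlMr ?r_sub_kmin_gt0 // mulrC kcond_kminE.
Qed.

(* The range is empty unless k > 0, and then the failure of the condition at k - 1 is the bound. *)
Lemma Mthr_le_hsorted i : (m <= i < n)%N -> M <= s`_i.
Proof.
move=> range_i; have k_gt0 : (0 < k)%N by case/andP: range_i; lia.
have k_lt_n := kmin_lt_n.
apply: le_trans (hsorted_le h _ _ range_i).
have := kcond_predkmin k_gt0; rewrite kcondE; last lia.
have -> : (n - k.-1 = m.+1)%N by lia.
have -> : (r - k.-1 = (r - k).+1)%N by have := kmin_le; lia.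
rewrite hsumS -leNgt -addn1 natrD mulrDl mul1r lerD2r.
by rewrite ler_pdivrMr ?r_sub_kmin_gt0 // mulrC.
Qed.

Lemma sum_min_Mthr : \sum_(j < n) Num.min (h j) M = r%:R * M.
Proof.
rewrite (sum_hsorted h (Num.min ^~ M)) (@big_cat_nat _ _ _ m) ?leq_subr //=.
rewrite (eq_big_nat _ _ (F2 := fun i => s`_i)); last first.
  by move=> i /andP [_ lt_im]; rewrite min_l // ltW // hsorted_lt_Mthr.
rewrite (eq_big_nat _ _ (F2 := fun => M)); last first.
  by move=> i range_i; rewrite min_r // Mthr_le_hsorted.
have hsum_m : hsum h m = M * (r - k)%:R by rewrite divfK // gt_eqF // r_sub_kmin_gt0.
rewrite sumr_const_nat -/(hsum h m) hsum_m -[M *+ _]mulr_natr -mulrDr mulrC -natrD.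
by congr (_%:R * _); have := kmin_le; lia.
Qed.

Lemma pimVcE i : pimVc r h i = Num.min (h i) M / M.
Proof.
rewrite /pimVc sum_min_Mthr -/M; field.
by rewrite gt_eqF ?Mthr_gt0 // pnatr_eq0 -lt0n r_gt0.
Qed.

Lemma sum_pimVc : \sum_(i < n) pimVc r h i = r%:R.
Proof.
under eq_bigr do rewrite pimVcE.
by rewrite -mulr_suml sum_min_Mthr mulfK // gt_eqF // Mthr_gt0.
Qed.

Lemma pimVc_ge0_le1 i : 0 <= pimVc r h i <= 1.
Proof.
have M_gt0 := Mthr_gt0; have M_ge0 := ltW M_gt0.
rewrite pimVcE divr_ge0 ?le_min ?h_ge0 //=.
by rewrite ler_pdivrMr // mul1r ge_min lexx orbT.
Qed.

End Threshold.

Section PenalizedCost.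
Context {R : realFieldType}.

Definition penalized_cost (H M q : R) := (1 - q) / q * H ^+ 2 + M ^+ 2 * q.

(* For H = 0 the minimizer is q = 0, where 0 / 0 = 0 makes the cost 0. *)
Lemma penalized_cost_min (H M q : R) : 0 <= H -> 0 < M -> 0 < q <= 1 ->
  penalized_cost H M (Num.min H M / M) <= penalized_cost H M q.
Proof.
move=> H_ge0 M_gt0 /andP [q_gt0 q_le1]; rewrite /penalized_cost.
have q_neq0 : q != 0 by rewrite gt_eqF.
have M_neq0 : M != 0 by rewrite gt_eqF.
have invq_ge0 : 0 <= q^-1 by rewrite invr_ge0 ltW.
have -> : (1 - q) / q = q^-1 - 1 by field.
have [le_MH | lt_HM] := leP M H.
  rewrite divff // subrr !mul0r add0r mulr1.
  have : (q^-1 - 1) * M ^+ 2 <= (q^-1 - 1) * H ^+ 2.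
    rewrite ler_wpM2l ?subr_ge0 ?invf_ge1 // lerXn2r // nnegrE.
    exact: ltW.
  have := mulr_ge0 (mulr_ge0 invq_ge0 (sqr_ge0 (1 - q))) (sqr_ge0 M).
  have -> : q^-1 * (1 - q) ^+ 2 * M ^+ 2 = (q^-1 - 1) * M ^+ 2 + M ^+ 2 * q - M ^+ 2.
    by field.
  lra.
have [-> | H_neq0] := eqVneq H 0.
  by rewrite mul0r expr0n /= !mulr0 !add0r mulr_ge0 ?sqr_ge0 ?ltW.
have -> : (1 - H / M) / (H / M) * H ^+ 2 + M ^+ 2 * (H / M) = 2 * M * H - H ^+ 2.
  by field; rewrite H_neq0 M_neq0.
have := mulr_ge0 invq_ge0 (sqr_ge0 (H - M * q)).
have -> : q^-1 * (H - M * q) ^+ 2 = q^-1 * H ^+ 2 - 2 * M * H + M ^+ 2 * q by field.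
lra.
Qed.

End PenalizedCost.

Lemma mxtrace_Vtilde (R : realType) (q n : nat) (e : 'I_n -> R)
    (g : 'I_n -> 'cV[R]_q) (pi : 'I_n -> R) :
  \tr (Vtilde e g pi) = 4 / n%:R ^+ 2 * \sum_(i < n) (1 - pi i) / pi i * hmVc e g i ^+ 2.
Proof.
rewrite /Vtilde mxtraceZ raddf_sum; congr (_ * _); apply: eq_bigr => i _.
rewrite /= mxtraceZ mxtrace_mulC -(mulrA ((1 - pi i) / pi i)) /hmVc exprMn real_normK ?num_real //.
have gTg_ge0 : 0 <= ((g i)^T *m g i) 0 0.
  by rewrite mxE; apply: sumr_ge0 => j _; rewrite mxE -expr2 sqr_ge0.
by rewrite sqr_sqrtr // /mxtrace big_ord1.
Qed.

Local Open Scope classical_set_scope.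

Theorem theorem3 (R : realType) (d q n : nat)
  (Omega : set 'rV[R]_d) (Theta : set 'rV[R]_q)
  (x : 'I_n -> 'rV[R]_d) (y : 'I_n -> R)
  (ys : 'rV[R]_d -> 'rV[R]_q -> R) (thetahat : 'rV[R]_q) (r : nat) :
  (forall i, Omega (x i)) ->
  (forall i, differentiable (ys (x i)) thetahat) ->
  Theta thetahat ->
  (forall th, Theta th -> loss x y ys thetahat <= loss x y ys th) ->
  (1 <= r <= n.-1)%N ->
  let e := resid x y ys thetahat in
  let g := fun i => grad (ys (x i)) thetahat in
  let h := hmVc e g in
  (0%E < hord h (n - r))%E ->
  let pi0 := pimVc r h in
  [/\ \sum_(i < n) pi0 i = r%:R,
      (forall i, 0 <= pi0 i <= 1) &
      forall pi : 'I_n -> R,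
        \sum_(i < n) pi i = r%:R -> (forall i, 0 < pi i <= 1) ->
        \tr (Vtilde e g pi0) <= \tr (Vtilde e g pi)].
Proof.
move=> _ _ _ _ /andP [r_gt0 r_le_n1] e g h hord_gt0 pi0.
have h_ge0 j : 0 <= h j by rewrite mulr_ge0 ?sqrtr_ge0.
have r_lt_n : (r < n)%N by lia.
have sum_pi0 := sum_pimVc h_ge0 r_gt0 r_lt_n hord_gt0.
split=> [//||pi sum_pi pi_range]; first exact: pimVc_ge0_le1.
rewrite !mxtrace_Vtilde ler_wpM2l ?divr_ge0 ?exprn_ge0 //.
set M := Mthr r h.
have cost_le : \sum_(i < n) penalized_cost (h i) M (pi0 i) <=
               \sum_(i < n) penalized_cost (h i) M (pi i).
  apply: ler_sum => i _; rewrite /pi0 pimVcE //.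
  exact: penalized_cost_min (Mthr_gt0 h_ge0 r_gt0 r_lt_n hord_gt0) (pi_range i).
by move: cost_le; rewrite !big_split /= -!mulr_sumr sum_pi0 sum_pi lerD2r.
Qed.
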